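(* Let $h \geq 1$ and $N \geq 1$ be integers. For all integers $d_1, \dots, d_N \in [0,h]$, the polygon $P(d_1, \dots, d_N)$ belongs to $\mathcal{P}_N$. Conversely, for every $P \in \mathcal{P}_N$ there exists a collection of integers $d_1, \dots, d_N \in [0,h]$, unique up to permutation, such that $P = P(d_1, \dots, d_N)$.
   Context: For integers $d_1, \dots, d_N$ between $0$ and $h$, the polygon $P(d_1,\dots,d_N)$ is the function on $[0,h]$ given by $P(d_1, \dots, d_N)(x) = \frac{1}{N} \sum_{i=1}^N \max(0, x + d_i - h)$. $\mathcal{P}_N$ denotes the set of convex polygons on $[0,h]$ starting at the origin (continuous convex piecewise linear functions $P$ on $[0,h]$ with $P(0)=0$) whose breakpoints have integral $x$-coordinates and whose slopes lie in $\frac{1}{N}\mathbb{Z} \cap [0,1]$. *)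

From HB Require Import structures.
From mathcomp Require Import all_boot all_order all_algebra.
From mathcomp Require Import reals.
Set Implicit Arguments. Unset Strict Implicit. Unset Printing Implicit Defensive.
Import Order.TTheory GRing.Theory Num.Theory.
Local Open Scope ring_scope.

Definition polygon (R : realType) (h N : nat) (d : seq nat) (x : R) : R :=
  (N%:R)^-1 * \sum_(di <- d) Num.max 0 (x + di%:R - h%:R).

Definition eqOn (R : realType) (h : nat) (f g : R -> R) : Prop :=
  forall x : R, 0 <= x <= h%:R -> f x = g x.

(* The class P_N: convex, P(0)=0, piecewise linear on [0,h] with breakpoints
   at integers (i.e. affine on each [k,k+1], which also gives continuity),
   with slopes in (1/N)Z \cap [0,1]. *)
Definition inPN (R : realType) (h N : nat) (f : R -> R) : Prop :=
  f 0 = 0 /\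
  (forall x y t : R, 0 <= x <= h%:R -> 0 <= y <= h%:R -> 0 <= t <= 1 ->
      f (t * x + (1 - t) * y) <= t * f x + (1 - t) * f y) /\
  exists s : nat -> R, forall k : nat, (k < h)%N ->
     (exists z : int, s k = z%:~R / N%:R) /\ 0 <= s k <= 1 /\
     (forall x : R, k%:R <= x <= k.+1%:R -> f x = f k%:R + s k * (x - k%:R)).

(* On [k, k+1] the polygon P(d) has slope #{i | h <= d_i + k} / N, so an element
   of P_N with P(0) = 0 is the same thing as a nondecreasing sequence of slope
   numerators 0 <= c_0 <= ... <= c_(h-1) <= N, and P = P(d) says exactly that the
   tail counts #{i | d_i >= t}, 1 <= t <= h, are the c_(h-t).  Tail counts (with
   N and the bound h) determine a multiset, which gives uniqueness; conversely
   d_j := h - #{k < h | c_k <= j}, j < N, has the prescribed tail counts. *)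

From mathcomp Require Import all_boot all_order all_algebra.
From mathcomp Require Import reals.
From mathcomp Require Import archimedean ring lra zify.
Set Implicit Arguments.
Unset Strict Implicit.
Unset Printing Implicit Defensive.
Import Order.TTheory GRing.Theory Num.Theory.

Lemma count_iota_all (p : pred nat) a n :
  (forall i, a <= i < a + n -> p i) -> count p (iota a n) = n.
Proof.
move=> p_iota; apply/eqP; rewrite -[n in _ == n](size_iota a) -all_count.
by apply/allP => i; rewrite mem_iota => /p_iota.
Qed.

Lemma count_iota_none (p : pred nat) a n :
  (forall i, a <= i < a + n -> ~~ p i) -> count p (iota a n) = 0.
Proof.
move=> np_iota; apply/eqP; rewrite -leqn0 leqNgt -has_count.
by apply/hasPn => i; rewrite mem_iota => /np_iota.
Qed.

Lemma count_leq_succ (s : seq nat) v :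
  count (leq v) s = count (pred1 v) s + count (leq v.+1) s.
Proof.
elim: s => //= a s ->.
by case: ltngtP => [||->] /=; rewrite ?eqxx ?ltnn; lia.
Qed.

Lemma perm_eq_count_leq (s s' : seq nat) :
  (forall t, count (leq t) s = count (leq t) s') -> perm_eq s s'.
Proof.
move=> eq_cnt; apply/allP => v _; apply/eqP.
by have := count_leq_succ s v; rewrite eq_cnt count_leq_succ eq_cnt; lia.
Qed.

Lemma perm_eq_shifted_counts (h : nat) (s s' : seq nat) :
  size s = size s' -> all (fun x => x <= h) s -> all (fun x => x <= h) s' ->
  (forall k, k < h -> count (fun x => h <= x + k) s = count (fun x => h <= x + k) s') ->
  perm_eq s s'.
Proof.
move=> eq_size s_le s'_le eq_cnt; apply: perm_eq_count_leq => t.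
case: (posnP t) => [->|t_gt0].
  by rewrite !(@eq_count _ _ predT) // !count_predT.
case: (leqP t h) => [t_le|t_gt].
  have e : leq t =1 (fun x => h <= x + (h - t)) by move=> x /=; lia.
  by rewrite !(eq_count e) eq_cnt //; lia.
rewrite !(@eq_in_count _ _ pred0) ?count_pred0 // => x.
  by move/(allP s'_le) => /=; lia.
by move/(allP s_le) => /=; lia.
Qed.

Section SeqOfCounts.
Variables (h N : nat) (c : nat -> nat).
Hypothesis c_step : forall k, k.+1 < h -> c k <= c k.+1.
Hypothesis c_le : forall k, k < h -> c k <= N.

Let c_mono k k' : k <= k' -> k' < h -> c k <= c k'.
Proof.
move=> le_kk' lt_k'h; apply: (@homo_leq_in nat [pred i | i < h] c leq leqnn leq_trans) => //.
- by move=> i j _ /[!inE] jh m /andP[_ /ltn_trans]; apply.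
- by move=> i _ /[!inE]; apply: c_step.
- by rewrite inE (leq_ltn_trans le_kk').
Qed.

Definition seq_of_counts :=
  [seq h - count (fun k => c k <= j) (iota 0 h) | j <- iota 0 N].

Lemma size_seq_of_counts : size seq_of_counts = N.
Proof. by rewrite size_map size_iota. Qed.

Lemma seq_of_counts_le : all (fun x => x <= h) seq_of_counts.
Proof. by apply/allP => x /mapP[j _ ->]; rewrite leq_subr. Qed.

Lemma count_c_leq_le j k : k < h ->
  (count (fun i => c i <= j) (iota 0 h) <= k) = (j < c k).
Proof.
move=> lt_kh; case: (ltnP j (c k)) => lt_j.
  rewrite -(subnKC (ltnW lt_kh)) iotaD count_cat.
  rewrite (@count_iota_none _ _ (h - k)) ?addn0.
    by apply: leq_trans (count_size _ _) _; rewrite size_iota.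
  move=> i /andP[ki ih]; rewrite -ltnNge; apply: (leq_trans lt_j).
  apply: c_mono => //; lia.
rewrite -(subnKC lt_kh) iotaD count_cat (@count_iota_all _ _ k.+1); first lia.
by move=> i /andP[_ ik]; apply: (leq_trans _ lt_j); apply: c_mono; lia.
Qed.

Lemma count_seq_of_counts k : k < h ->
  count (fun x => h <= x + k) seq_of_counts = c k.
Proof.
move=> lt_kh; rewrite count_map.
have count_le_h j : count (fun i => c i <= j) (iota 0 h) <= h.
  by apply: leq_trans (count_size _ _) _; rewrite size_iota.
rewrite (@eq_count _ _ (fun j => j < c k)); last first.
  by move=> j /=; rewrite -(count_c_leq_le j lt_kh); have := count_le_h j; lia.
rewrite -(subnKC (c_le lt_kh)) iotaD count_cat.
rewrite (@count_iota_all _ _ (c k)) ?(@count_iota_none _ (c k)) => [|i|i]; lia.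
Qed.
End SeqOfCounts.

Local Open Scope ring_scope.

Lemma truncn_scaled_frac (R : archiRealFieldType) (N : nat) (z : int) (x : R) :
  (0 < N)%N -> x = z%:~R / N%:R -> 0 <= x <= 1 ->
  (Num.truncn (N%:R * x))%:R = N%:R * x /\ (Num.truncn (N%:R * x) <= N)%N.
Proof.
move=> N_gt0 x_frac /andP[x_ge0 x_le1]; split.
  apply: truncnK; rewrite natrEint mulr_ge0 ?ler0n // andbT.
  by rewrite x_frac mulrC divfK ?intr_int // pnatr_eq0 -lt0n.
rewrite -[N in (_ <= N)%N](@natrK R) le_truncn //.
by rewrite -[X in _ <= X]mulr1 ler_wpM2l ?ler0n.
Qed.

Section PiecewiseAffine.
Variables (R : realType) (h : nat).
Implicit Types (f g : R -> R) (x : R).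

Definition piecewise_affine f := forall k, (k < h)%N ->
  forall x, k%:R <= x <= k.+1%:R -> f x = f k%:R + (f k.+1%:R - f k%:R) * (x - k%:R).

Lemma affine_slopeE f (k : nat) (s : R) :
  (forall x, k%:R <= x <= k.+1%:R -> f x = f k%:R + s * (x - k%:R)) ->
  s = f k.+1%:R - f k%:R.
Proof.
move=> f_aff; rewrite (f_aff k.+1%:R) ?ler_nat ?leqnSn ?leqnn //.
by rewrite -natr1; ring.
Qed.

Lemma unit_interval_cover x : (0 < h)%N -> 0 <= x <= h%:R ->
  exists2 k, (k < h)%N & k%:R <= x <= k.+1%:R.
Proof.
move=> h_gt0 /andP[x_ge0 x_le]; case: (ltnP (Num.truncn x) h.-1) => [lt_xh|le_hx].
  exists (Num.truncn x); first lia.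
  by rewrite truncn_le x_ge0 /= ltW // truncnS_gt.
exists h.-1; first lia.
rewrite prednK // x_le andbT; apply: le_trans (_ : (Num.truncn x)%:R <= x).
  by rewrite ler_nat.
by rewrite truncn_le.
Qed.

Lemma eqOn_piecewise_affine f g : (0 < h)%N ->
  piecewise_affine f -> piecewise_affine g -> f 0 = g 0 ->
  (forall k, (k < h)%N -> f k.+1%:R - f k%:R = g k.+1%:R - g k%:R) ->
  eqOn h f g.
Proof.
move=> h_gt0 f_aff g_aff eq0 eq_incr.
have eq_nat k : (k <= h)%N -> f k%:R = g k%:R.
  elim: k => [|k IH lt_kh]; first by rewrite eq0.
  by have := eq_incr k lt_kh; rewrite IH ?(ltnW lt_kh) // => /addIr.
move=> x /(unit_interval_cover h_gt0)[k lt_kh x_k].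
by rewrite (f_aff k lt_kh x x_k) (g_aff k lt_kh x x_k) eq_incr // eq_nat // ltnW.
Qed.

Lemma convex_increment_le f :
  (forall x y t, 0 <= x <= h%:R -> 0 <= y <= h%:R -> 0 <= t <= 1 ->
     f (t * x + (1 - t) * y) <= t * f x + (1 - t) * f y) ->
  forall k, (k.+2 <= h)%N -> f k.+1%:R - f k%:R <= f k.+2%:R - f k.+1%:R.
Proof.
move=> f_conv k lt_k2h.
have in_range j : (j <= h)%N -> 0 <= (j%:R : R) <= h%:R by rewrite ler0n ler_nat.
have half_01 : 0 <= (2^-1 : R) <= 1 by apply/andP; split; lra.
have := f_conv _ _ _ (in_range k (ltnW (ltnW lt_k2h))) (in_range _ lt_k2h) half_01.
have -> : 2^-1 * k%:R + (1 - 2^-1) * k.+2%:R = k.+1%:R :> R.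
  by rewrite -[k.+2]addn2 -[k.+1]addn1 !natrD; field.
lra.
Qed.

End PiecewiseAffine.

Section Polygon.
Variables (R : realType) (h N : nat).
Implicit Types (d : seq nat) (x y t : R).

Lemma max0_affine (di k : nat) x : k%:R <= x <= k.+1%:R ->
  Num.max 0 (x + di%:R - h%:R) =
  Num.max 0 (k%:R + di%:R - h%:R) + (h <= di + k)%N%:R * (x - k%:R).
Proof.
move=> /andP[k_le x_le]; case: leqP => [le_h|lt_h].
  have : h%:R <= di%:R + k%:R :> R by rewrite -natrD ler_nat.
  by move=> ?; rewrite !max_r ?mul1r; lra.
have : (di + k).+1%:R <= h%:R :> R by rewrite ler_nat.
rewrite -addn1 !natrD => ?; rewrite -addn1 natrD in x_le.
by rewrite !max_l ?mul0r; lra.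
Qed.

Lemma polygon_affine d (k : nat) x : k%:R <= x <= k.+1%:R ->
  polygon h N d x = polygon h N d k%:R +
    (count (fun di => h <= di + k)%N d)%:R / N%:R * (x - k%:R).
Proof.
move=> x_k; rewrite /polygon.
have -> : \sum_(di <- d) Num.max 0 (x + di%:R - h%:R) =
    \sum_(di <- d) Num.max 0 (k%:R + di%:R - h%:R) +
    (count (fun di => h <= di + k)%N d)%:R * (x - k%:R).
  elim: d => [|di d IH]; first by rewrite !big_nil mul0r addr0.
  by rewrite !big_cons IH (max0_affine di x_k) /= natrD; ring.
ring.
Qed.

Lemma polygon_increment d (k : nat) :
  polygon h N d k.+1%:R - polygon h N d k%:R =
  (count (fun di => h <= di + k)%N d)%:R / N%:R :> R.
Proof. by rewrite -(affine_slopeE (polygon_affine d (k:=k))). Qed.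

Lemma polygon_piecewise_affine d : piecewise_affine h (@polygon R h N d).
Proof. by move=> k _ x /polygon_affine ->; rewrite polygon_increment. Qed.

Lemma polygon0 d : all (fun di => di <= h)%N d -> polygon h N d 0 = 0 :> R.
Proof.
move=> d_le; rewrite /polygon big_seq big1 ?mulr0 // => di /(allP d_le) le_di.
by rewrite max_l // add0r subr_le0 ler_nat.
Qed.

Lemma max0_convex (di : nat) x y t : 0 <= t <= 1 ->
  Num.max 0 ((t * x + (1 - t) * y) + di%:R - h%:R) <=
  t * Num.max 0 (x + di%:R - h%:R) + (1 - t) * Num.max 0 (y + di%:R - h%:R).
Proof.
move=> /andP[t_ge0 t_le1].
set a := Num.max 0 (x + _ - _); set b := Num.max 0 (y + _ - _).
have a_ge0 : 0 <= a by rewrite le_max lexx.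
have a_ge : x + di%:R - h%:R <= a by rewrite le_max lexx orbT.
have b_ge0 : 0 <= b by rewrite le_max lexx.
have b_ge : y + di%:R - h%:R <= b by rewrite le_max lexx orbT.
by rewrite ge_max; apply/andP; split; nra.
Qed.

Lemma polygon_convex d x y t : 0 <= t <= 1 ->
  polygon h N d (t * x + (1 - t) * y) <=
  t * polygon h N d x + (1 - t) * polygon h N d y.
Proof.
move=> t_01; rewrite /polygon [X in _ <= X + _]mulrCA [X in _ <= _ + X]mulrCA -mulrDr.
apply: ler_wpM2l; first by rewrite invr_ge0 ler0n.
elim: d => [|di d IH]; first by rewrite !big_nil; lra.
by rewrite !big_cons; apply: (le_trans (lerD (max0_convex di x y t_01) IH)); lra.
Qed.

Lemma polygon_inPN d : (0 < N)%N -> size d = N ->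
  all (fun di => di <= h)%N d -> inPN h N (@polygon R h N d).
Proof.
move=> N_gt0 size_d d_le; split; first exact: polygon0.
split=> [x y t _ _|]; first exact: polygon_convex.
exists (fun k => (count (fun di => h <= di + k)%N d)%:R / N%:R) => k _.
split; first by exists (count (fun di => h <= di + k)%N d).
split; last by move=> x /polygon_affine.
rewrite divr_ge0 ?ler0n //= ler_pdivrMr ?ltr0n // mul1r ler_nat -size_d.
exact: count_size.
Qed.

End Polygon.

Section Converse.
Variables (R : realType) (h N : nat) (P : R -> R).
Hypotheses (N_gt0 : (0 < N)%N) (P_PN : inPN h N P).

Lemma inPN_piecewise_affine : piecewise_affine h P.
Proof.
have [_ [_ [s P_aff]]] := P_PN; move=> k lt_kh.
by have [_ [_ aff]] := P_aff k lt_kh; rewrite -(affine_slopeE aff).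
Qed.

Lemma inPN_increment_frac k : (k < h)%N ->
  (exists z : int, P k.+1%:R - P k%:R = z%:~R / N%:R) /\ 0 <= P k.+1%:R - P k%:R <= 1.
Proof.
have [_ [_ [s P_aff]]] := P_PN; move=> lt_kh.
by have [s_frac [s_01 aff]] := P_aff k lt_kh; rewrite -(affine_slopeE aff).
Qed.

Definition increment_count k := Num.truncn (N%:R * (P k.+1%:R - P k%:R)).

Lemma increment_countE k : (k < h)%N ->
  P k.+1%:R - P k%:R = (increment_count k)%:R / N%:R.
Proof.
move=> lt_kh; have [[z z_frac] incr_01] := (inPN_increment_frac lt_kh).
have [-> _] := truncn_scaled_frac N_gt0 z_frac incr_01.
by rewrite mulrAC mulfV ?mul1r // pnatr_eq0 -lt0n.
Qed.

Lemma increment_count_le k : (k < h)%N -> (increment_count k <= N)%N.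
Proof.
move=> lt_kh; have [[z z_frac] incr_01] := (inPN_increment_frac lt_kh).
exact: (truncn_scaled_frac N_gt0 z_frac incr_01).2.
Qed.

Lemma increment_count_step k : (k.+1 < h)%N ->
  (increment_count k <= increment_count k.+1)%N.
Proof.
move=> lt_k1h; apply/le_truncn/ler_wpM2l; first exact: ler0n.
by have [_ [P_conv _]] := P_PN; exact: convex_increment_le P_conv _ lt_k1h.
Qed.

Definition seq_of_inPN := seq_of_counts h N increment_count.

Lemma count_seq_of_inPN k : (k < h)%N ->
  count (fun di => h <= di + k)%N seq_of_inPN = increment_count k.
Proof.
exact: count_seq_of_counts increment_count_step increment_count_le k.
Qed.

Lemma inPN_eqOn_polygon : (0 < h)%N -> eqOn h P (polygon h N seq_of_inPN).
Proof.
move=> h_gt0; apply: eqOn_piecewise_affine => //.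
- exact: inPN_piecewise_affine.
- exact: polygon_piecewise_affine.
- have [P0 _] := P_PN; rewrite P0 polygon0 //; exact: seq_of_counts_le.
- by move=> k lt_kh; rewrite polygon_increment count_seq_of_inPN // increment_countE.
Qed.

Lemma inPN_polygon_uniq d : size d = N -> all (fun di => di <= h)%N d ->
  eqOn h P (polygon h N d) -> perm_eq seq_of_inPN d.
Proof.
move=> size_d d_le P_d; apply: perm_eq_shifted_counts.
- by rewrite size_d size_seq_of_counts.
- exact: seq_of_counts_le.
- exact: d_le.
move=> k lt_kh; rewrite count_seq_of_inPN //.
have in_range j : (j <= h)%N -> 0 <= (j%:R : R) <= h%:R by rewrite ler0n ler_nat.
have := polygon_increment R h N d k.
rewrite -!P_d ?in_range ?(ltnW lt_kh) // increment_countE //.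
move/(mulIf _); rewrite invr_eq0 pnatr_eq0 -lt0n => /(_ N_gt0) /eqP.
by rewrite eqr_nat => /eqP.
Qed.

End Converse.

Theorem mainTheorem1 (R : realType) (h N : nat) :
  (1 <= h)%N -> (1 <= N)%N ->
  (forall d : seq nat, size d = N -> all (fun di => di <= h)%N d ->
      inPN h N (@polygon R h N d)) /\
  (forall P : R -> R, inPN h N P ->
      exists d : seq nat,
        [/\ size d = N, all (fun di => di <= h)%N d,
            eqOn h P (@polygon R h N d) &
            forall d' : seq nat, size d' = N -> all (fun di => di <= h)%N d' ->
              eqOn h P (@polygon R h N d') -> perm_eq d d']).
Proof.
move=> h_gt0 N_gt0; split=> [d size_d d_le|P P_PN]; first exact: polygon_inPN.
exists (seq_of_inPN h N P); split.
- exact: size_seq_of_counts.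
- exact: seq_of_counts_le.
- exact: inPN_eqOn_polygon.
- by move=> d'; apply: inPN_polygon_uniq.
Qed.
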